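(* Let $(G,\cdot)$ be a group and $\psi\in\operatorname{End}(G,\cdot)$. (1) If $\psi([\psi(G),G])\le Z(G,\cdot)$, then each of the following maps $G\times G\to G\times G$ defines a set-theoretic non-degenerate solution of the Yang--Baxter equation on $G$: $$r_1(g,h)=\big(\psi(g)\,h\,\psi(g)^{-1},\ \psi(h^{-1}g)\,h^{-1}\psi(g)^{-1}g\,\psi(g)\,h\,\psi(g^{-1}h)\big);$$ $$r_2(g,h)=\big(g\,\psi(g)\,h\,\psi(g)^{-1}g^{-1},\ \psi(g h^{-1}g^{-1})\,g\,\psi(g h g^{-1})\big).$$ These two are mutually inverse and coincide if and only if $(G,\cdot)$ is abelian. (2) If moreover $\psi([G,G])\le Z(G,\cdot)$, then also $$r_3(g,h)=\big(\psi(g)^{-1}h\,\psi(g),\ \psi(g)^{-1}h^{-1}\psi(g)\,g\,h\big);$$ $$r_4(g,h)=\big(g\,h\,\psi(h)\,g^{-1}\psi(h)^{-1},\ \psi(h)\,g\,\psi(h)^{-1}\big)$$ define set-theoretic non-degenerate solutions of the Yang--Baxter equation; they are mutually inverse and coincide if and only if $g\,\psi(g)\,h\,\psi(g)^{-1}=h\,\psi(h)\,g\,\psi(h)^{-1}$ for all $g,h\in G$.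
   Context: All products are in $(G,\cdot)$; $\psi(G)$ is the image of $\psi$; $[x,y]=xyx^{-1}y^{-1}$ and $[A,B]$ is the subgroup generated by $[a,b]$, $a\in A,b\in B$; $Z(G,\cdot)$ is the centre. A set-theoretic solution of the Yang--Baxter equation is a pair $(X,r)$ with $X\neq\emptyset$ and $r\colon X\times X\to X\times X$, $r(x,y)=(\sigma_x(y),\tau_y(x))$, a bijection satisfying $(r\times\mathrm{id}_X)(\mathrm{id}_X\times r)(r\times\mathrm{id}_X)=(\mathrm{id}_X\times r)(r\times\mathrm{id}_X)(\mathrm{id}_X\times r)$; it is non-degenerate if all $\sigma_x$ and $\tau_x$ are bijective. *)

From Stdlib Require Import ssreflect ssrfun.

Record group := Group {
  carrier :> Type;
  gmul : carrier -> carrier -> carrier;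
  ginv : carrier -> carrier;
  gone : carrier;
  gmulA : forall x y z, gmul x (gmul y z) = gmul (gmul x y) z;
  gmul1g : forall x, gmul gone x = x;
  gmulg1 : forall x, gmul x gone = x;
  gmulVg : forall x, gmul (ginv x) x = gone;
  gmulgV : forall x, gmul x (ginv x) = gone
}.

Declare Scope grp_scope.
Delimit Scope grp_scope with grp.
Notation "x * y" := (gmul _ x y) : grp_scope.
Notation "x ^-1" := (ginv _ x) : grp_scope.
Notation "1" := (gone _) : grp_scope.
Local Open Scope grp_scope.

Section Defs.
Variable G : group.

Definition is_endo (psi : G -> G) : Prop :=
  forall x y : G, psi (x * y) = psi x * psi y.

Definition gcomm (x y : G) : G := x * y * x^-1 * y^-1.

Inductive gen (S : G -> Prop) : G -> Prop :=
  | gen_in x : S x -> gen S x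
  | gen_one : gen S 1
  | gen_mul x y : gen S x -> gen S y -> gen S (x * y)
  | gen_inv x : gen S x -> gen S (x^-1).

Definition comm_subgroup (A B : G -> Prop) : G -> Prop :=
  gen (fun x => exists a b, A a /\ B b /\ x = gcomm a b).

Definition image (psi : G -> G) : G -> Prop := fun y => exists x, y = psi x.
Definition whole : G -> Prop := fun _ => True.

Definition center : G -> Prop := fun z => forall y : G, z * y = y * z.

Definition abelian : Prop := forall x y : G, x * y = y * x.

Definition maps_into_center (psi : G -> G) (H : G -> Prop) : Prop :=
  forall x, H x -> center (psi x).

End Defs.

Section YBE.
Variable X : Type.

Definition r12 (r : X * X -> X * X) (t : X * X * X) : X * X * X :=
  let '(x, y, z) := t in let '(a, b) := r (x, y) in (a, b, z).
Definition r23 (r : X * X -> X * X) (t : X * X * X) : X * X * X :=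
  let '(x, y, z) := t in let '(b, c) := r (y, z) in (x, b, c).

Definition braid_eq (r : X * X -> X * X) : Prop :=
  forall t, r12 r (r23 r (r12 r t)) = r23 r (r12 r (r23 r t)).

Definition sigma (r : X * X -> X * X) (x : X) : X -> X := fun y => fst (r (x, y)).
Definition tau (r : X * X -> X * X) (y : X) : X -> X := fun x => snd (r (x, y)).

(* X is nonempty automatically once r is given on a group; we keep the
   paper's definition: bijective r satisfying the braid equation *)
Definition is_solution (r : X * X -> X * X) : Prop :=
  inhabited X /\ bijective r /\ braid_eq r.

Definition nondegenerate (r : X * X -> X * X) : Prop :=
  (forall x, bijective (sigma r x)) /\ (forall y, bijective (tau r y)).

Definition nd_solution (r : X * X -> X * X) : Prop :=
  is_solution r /\ nondegenerate r.

Definition mutually_inverse (r s : X * X -> X * X) : Prop :=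
  (forall p, r (s p) = p) /\ (forall p, s (r p) = p).

Definition coincide (r s : X * X -> X * X) : Prop := forall p, r p = s p.
End YBE.

Section Maps.
Variables (G : group) (psi : G -> G).

Definition r1 (p : G * G) : G * G :=
  let '(g, h) := p in
  (psi g * h * (psi g)^-1,
   psi (h^-1 * g) * h^-1 * (psi g)^-1 * g * psi g * h * psi (g^-1 * h)).

Definition r2 (p : G * G) : G * G :=
  let '(g, h) := p in
  (g * psi g * h * (psi g)^-1 * g^-1,
   psi (g * h^-1 * g^-1) * g * psi (g * h * g^-1)).

Definition r3 (p : G * G) : G * G :=
  let '(g, h) := p in
  ((psi g)^-1 * h * psi g,
   (psi g)^-1 * h^-1 * psi g * g * h).

Definition r4 (p : G * G) : G * G :=
  let '(g, h) := p in
  (g * h * psi h * g^-1 * (psi h)^-1,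
   psi h * g * (psi h)^-1).
End Maps.

(* The proof goes through skew braces.  For a skew brace (G, *, ∘) put
   λ_a(b) = a^-1 (a ∘ b); then r_B(a, b) = (λ_a(b), bar(λ_a(b)) ∘ a ∘ b), where
   bar is the ∘-inverse, is a non-degenerate solution (Guarnieri--Vendramin);
   the solution of the opposite brace (G, *^op, ∘) is its inverse, and the two
   coincide exactly when (G, * ) is abelian.
   If ψ([ψ(G), G]) is central, a ∘ b = a ψ(a) b ψ(a)^-1 makes (G, *, ∘) a skew
   brace with r1 = r_B and r2 = r_{B^op}.  If moreover ψ([G, G]) is central,
   the roles of the two operations can be exchanged: (G, ∘, * ) is a skew brace
   B' with r3 = r_{B'} and r4 = r_{B'^op}, and (G, ∘) is abelian exactly under
   the stated commutation condition. *)

From Stdlib Require Import ssreflect ssrfun List Permutation Arith Bool.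
From Stdlib Require Import FunctionalExtensionality.
Import ListNotations.

Section WordNormalization.
Variables (A : Type) (mul : A -> A -> A) (inv : A -> A) (one : A).
Hypotheses (mulA : forall x y z, mul x (mul y z) = mul (mul x y) z)
  (mul1x : forall x, mul one x = x) (mulx1 : forall x, mul x one = x)
  (mulVx : forall x, mul (inv x) x = one) (mulxV : forall x, mul x (inv x) = one).

Inductive term := Atom (n : nat) | Mul (s t : term) | Inv (t : term) | One.

Variable env : list A.
Definition atom (n : nat) : A := nth n env one.
Fixpoint eval (t : term) : A :=
  match t with
  | Atom n => atom n | Mul s t => mul (eval s) (eval t)
  | Inv t => inv (eval t) | One => one
  end.

Definition letter (x : nat * bool) : A :=
  if snd x then atom (fst x) else inv (atom (fst x)).
Fixpoint eval_word (w : list (nat * bool)) : A :=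
  if w is x :: w' then mul (letter x) (eval_word w') else one.
Definition flip (x : nat * bool) : nat * bool := (fst x, negb (snd x)).
Fixpoint flatten (t : term) : list (nat * bool) :=
  match t with
  | Atom n => [(n, true)] | Mul s t => flatten s ++ flatten t
  | Inv t => rev (map flip (flatten t)) | One => nil
  end.

Lemma invK x : inv (inv x) = x.
Proof. by rewrite -[RHS]mul1x -(mulVx (inv x)) -mulA mulVx mulx1. Qed.

Lemma inv_mul x y : inv (mul x y) = mul (inv y) (inv x).
Proof.
have inv_unique u v : mul u v = one -> inv u = v.
  by move=> uv; rewrite -[LHS]mulx1 -uv mulA mulVx mul1x.
by apply: inv_unique; rewrite mulA -(mulA x) mulxV mulx1 mulxV.
Qed.

Lemma eval_word_cat u v : eval_word (u ++ v) = mul (eval_word u) (eval_word v).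
Proof. by elim: u => [|x u IH] /=; rewrite ?mul1x // IH mulA. Qed.

Lemma eval_word_inv w : eval_word (rev (map flip w)) = inv (eval_word w).
Proof.
elim: w => [|[n b] w IH] /=; first by rewrite -[inv one]mul1x mulxV.
rewrite eval_word_cat IH /= mulx1 inv_mul /letter /=.
by case: b; rewrite ?invK.
Qed.

Lemma flatten_sound t : eval_word (flatten t) = eval t.
Proof.
elim: t => [n|s IHs t IHt|t IHt|] //=.
- by rewrite eval_word_cat IHs IHt.
- by rewrite eval_word_inv IHt.
Qed.

Definition cancels (x y : nat * bool) : bool :=
  Nat.eqb (fst x) (fst y) && xorb (snd x) (snd y).
Definition push (x : nat * bool) (w : list (nat * bool)) : list (nat * bool) :=
  if w is y :: w' then (if cancels x y then w' else x :: w) else [x].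
Definition reduce (w : list (nat * bool)) : list (nat * bool) :=
  fold_right push nil w.

Lemma push_sound x w : eval_word (push x w) = mul (letter x) (eval_word w).
Proof.
case: w => [|[n' b'] w] //=; case: x => [n b].
case E: (cancels _ _) => //=; move: E; rewrite /cancels /=.
move/andb_true_iff => [/Nat.eqb_eq <-]; rewrite mulA /letter /=.
by case: b; case: b' => //= _; rewrite ?mulxV ?mulVx mul1x.
Qed.

Lemma reduce_sound w : eval_word (reduce w) = eval_word w.
Proof. by elim: w => [|x w IH] //=; rewrite push_sound IH. Qed.

(* Atoms whose indices lie in [central_atoms] are assumed to be central; their
   letters can be moved to the front of a word and sorted. *)
Variable central_atoms : list nat.
Hypothesis atoms_central :
  forall k, In k central_atoms -> forall y, mul (atom k) y = mul y (atom k).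

Definition is_central (x : A) : Prop := forall y, mul x y = mul y x.
Definition central_letter (x : nat * bool) : bool :=
  existsb (Nat.eqb (fst x)) central_atoms.
Definition noncentral_letter (x : nat * bool) : bool := negb (central_letter x).

Lemma central_inv a : is_central a -> is_central (inv a).
Proof.
move=> Ha y; rewrite -[LHS]mulx1 -(mulxV a) mulA -(mulA _ y) -Ha.
by rewrite !mulA mulVx mul1x.
Qed.

Lemma central_letter_sound x : central_letter x = true -> is_central (letter x).
Proof.
case: x => n b /existsb_exists [k [Hk /Nat.eqb_eq /= Enk]]; subst k.
by case: b; last apply: central_inv; apply: atoms_central.
Qed.

Lemma central_word w :
  (forall x, In x w -> central_letter x = true) -> is_central (eval_word w).
Proof.
elim: w => [|x w IH] /= Hw y; first by rewrite mul1x mulx1.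
have Hx : is_central (letter x) by apply: central_letter_sound; apply: Hw; left.
have Hw' : is_central (eval_word w) by apply: IH => z Hz; apply: Hw; right.
by rewrite -mulA Hw' mulA Hx -mulA.
Qed.

Lemma split_central_sound w :
  eval_word w =
  mul (eval_word (filter central_letter w)) (eval_word (filter noncentral_letter w)).
Proof.
elim: w => [|x w IH] /=; first by rewrite mul1x.
have Hc : is_central (eval_word (filter central_letter w)).
  by apply: central_word => y /filter_In [].
rewrite /noncentral_letter; case: (central_letter x) => /=; rewrite IH mulA //.
by rewrite -(Hc (letter x)) -mulA.
Qed.

Definition letter_le (x y : nat * bool) : bool :=
  Nat.ltb (fst x) (fst y) || (Nat.eqb (fst x) (fst y) && implb (snd x) (snd y)).
Fixpoint insert (x : nat * bool) (w : list (nat * bool)) : list (nat * bool) :=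
  if w is y :: w' then (if letter_le x y then x :: w else y :: insert x w') else [x].
Fixpoint sort (w : list (nat * bool)) : list (nat * bool) :=
  if w is x :: w' then insert x (sort w') else nil.

Lemma sort_perm w : Permutation (sort w) w.
Proof.
have insert_perm x u : Permutation (insert x u) (x :: u).
  elim: u => [|y u IH] //=; case: (letter_le x y) => //.
  exact: perm_trans (perm_skip y IH) (perm_swap x y u).
elim: w => [|x w IH] //=.
exact: perm_trans (insert_perm _ _) (perm_skip x IH).
Qed.

Lemma perm_central_sound u v : Permutation u v ->
  (forall x, In x u -> central_letter x = true) -> eval_word u = eval_word v.
Proof.
elim => [|x u' v' _ IH|x y l|u' v' w' Huv IH1 _ IH2] //= Hu.
- by rewrite IH // => z Hz; apply: Hu; right.
- by rewrite !mulA central_letter_sound //; apply: Hu; left.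
- rewrite IH1 // IH2 // => z Hz.
  by apply: Hu; apply: Permutation_in Hz; apply: Permutation_sym.
Qed.

Definition normal_form (w : list (nat * bool)) :
    list (nat * bool) * list (nat * bool) :=
  (reduce (sort (filter central_letter w)), reduce (filter noncentral_letter w)).

Lemma normal_form_sound w :
  eval_word w = mul (eval_word (fst (normal_form w))) (eval_word (snd (normal_form w))).
Proof.
rewrite /= !reduce_sound split_central_sound; congr mul.
apply: perm_central_sound; first exact: Permutation_sym (sort_perm _).
by move=> x /filter_In [].
Qed.

Theorem normal_form_eq s t :
  normal_form (flatten s) = normal_form (flatten t) -> eval s = eval t.
Proof.
by move=> E; rewrite -!flatten_sound normal_form_sound E -normal_form_sound.
Qed.
End WordNormalization.

Ltac list_mem x xs :=
  lazymatch xs with nil => false | cons x _ => true | cons _ ?xs' => list_mem x xs' end.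
Ltac add_atom x xs :=
  let b := list_mem x xs in
  lazymatch b with true => xs | false => constr:(cons x xs) end.
Ltac collect_atoms mul inv one t xs :=
  lazymatch t with
  | mul ?a ?b => let xs := collect_atoms mul inv one a xs in collect_atoms mul inv one b xs
  | inv ?a => collect_atoms mul inv one a xs
  | one => xs
  | _ => add_atom t xs
  end.
Ltac atom_index x xs :=
  lazymatch xs with
  | cons x _ => constr:(O)
  | cons _ ?xs' => let n := atom_index x xs' in constr:(S n)
  end.
Ltac reify mul inv one xs t :=
  lazymatch t with
  | mul ?a ?b =>
      let ra := reify mul inv one xs a in let rb := reify mul inv one xs b in
      constr:(Mul ra rb)
  | inv ?a => let ra := reify mul inv one xs a in constr:(Inv ra)
  | one => constr:(One)
  | _ => let n := atom_index t xs in constr:(Atom n)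
  end.
Ltac central_indices is_central_atom xs n :=
  lazymatch xs with
  | nil => constr:(@nil nat)
  | cons ?x ?xs' =>
      let r := central_indices is_central_atom xs' (S n) in
      let b := is_central_atom x in
      lazymatch b with true => constr:(cons n r) | false => r end
  end.

(* [word_eq ...] proves an equation between two group expressions that holds
   in every group in which the atoms accepted by [is_central_atom] are
   central; [prove_central] must close the goals [forall y, c * y = y * c]
   for those atoms [c]. *)
Ltac word_eq mul inv one mulA mul1x mulx1 mulVx mulxV is_central_atom prove_central :=
  lazymatch goal with |- ?l = ?r =>
    let T := type of l in
    let xs := collect_atoms mul inv one l (@nil T) in
    let xs := collect_atoms mul inv one r xs in
    let rl := reify mul inv one xs l in
    let rr := reify mul inv one xs r in
    let cs := central_indices is_central_atom xs O in
    refine (normal_form_eq _ mul inv one mulA mul1x mulx1 mulVx mulxV xs cs _ rl rr _);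
    [ let k := fresh in let Hk := fresh in
      intros k Hk; simpl in Hk;
      repeat (destruct Hk as [Hk|Hk]; [subst k; simpl; prove_central|]);
      contradiction
    | vm_compute; reflexivity ]
  end.

Ltac no_central_atom x := constr:(false).

Ltac group_eq_with G is_central_atom prove_central :=
  word_eq (gmul G) (ginv G) (gone G) (gmulA G) (gmul1g G) (gmulg1 G) (gmulVg G)
    (gmulgV G) is_central_atom prove_central.
Ltac group_eq G := group_eq_with G no_central_atom idtac.

Local Open Scope grp_scope.

Record skew_brace (G : group) := SkewBrace {
  circ : G -> G -> G;
  cinv : G -> G;
  circA : forall x y z, circ x (circ y z) = circ (circ x y) z;
  circ1x : forall x, circ 1 x = x;
  circx1 : forall x, circ x 1 = x;
  circVx : forall x, circ (cinv x) x = 1;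
  circxV : forall x, circ x (cinv x) = 1;
  circ_compat : forall a b d, circ a (b * d) = circ a b * a^-1 * circ a d
}.
Arguments circ {G}.
Arguments cinv {G}.
Arguments circA {G}.
Arguments circ1x {G}.
Arguments circx1 {G}.
Arguments circVx {G}.
Arguments circxV {G}.
Arguments circ_compat {G}.

Ltac circ_eq B :=
  lazymatch type of B with skew_brace ?G =>
    word_eq (circ B) (cinv B) (gone G) (circA B) (circ1x B) (circx1 B) (circVx B)
      (circxV B) no_central_atom idtac
  end.

Definition circ_group (G : group) (B : skew_brace G) : group :=
  Group G (circ B) (cinv B) 1 (circA B) (circ1x B) (circx1 B) (circVx B) (circxV B).
Arguments circ_group {G}.

Definition opp_group (G : group) : group :=
  Group G (fun x y => y * x) (ginv G) 1
    (fun x y z => esym (gmulA G z y x)) (gmulg1 G) (gmul1g G) (gmulgV G) (gmulVg G).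

Lemma opp_compat (G : group) (B : skew_brace G) a b d :
  circ B a (d * b) = circ B a d * (a^-1 * circ B a b).
Proof. rewrite circ_compat; group_eq G. Qed.

Definition opp_brace (G : group) (B : skew_brace G) : skew_brace (opp_group G) :=
  SkewBrace (opp_group G) (circ B) (cinv B) (circA B) (circ1x B) (circx1 B)
    (circVx B) (circxV B) (opp_compat G B).
Arguments opp_brace {G}.

Section SkewBraceSolution.
Variables (G : group) (B : skew_brace G).
Local Notation "a ∘ b" := (circ B a b) (at level 40, left associativity).
Local Notation bar := (cinv B).

Definition lam (a b : G) : G := a^-1 * (a ∘ b).
Definition mu (a b : G) : G := bar (lam a b) ∘ (a ∘ b).
Definition gv_solution (p : G * G) : G * G := let '(a, b) := p in (lam a b, mu a b).

Lemma circ_lam a b : a ∘ b = a * lam a b.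
Proof. rewrite /lam; group_eq G. Qed.

Lemma lam_mul a b d : lam a (b * d) = lam a b * lam a d.
Proof. rewrite /lam circ_compat; group_eq G. Qed.

Lemma lam_inv a b : lam a b^-1 = (lam a b)^-1.
Proof.
have lam_one : lam a 1 = 1 by rewrite /lam circx1; group_eq G.
have E := lam_mul a b b^-1; rewrite gmulgV lam_one in E.
transitivity ((lam a b)^-1 * (lam a b * lam a b^-1)); first by group_eq G.
by rewrite -E; group_eq G.
Qed.

Lemma lam_conj a w b : lam a (w^-1 * b * w) = (lam a w)^-1 * lam a b * lam a w.
Proof. by rewrite !lam_mul lam_inv. Qed.

Lemma lam1 b : lam 1 b = b.
Proof. rewrite /lam circ1x; group_eq G. Qed.

Lemma lam_circ a b d : lam (a ∘ b) d = lam a (lam b d).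
Proof. rewrite {1}/lam -circA (circ_lam b d) circ_compat /lam; group_eq G. Qed.

Lemma lamK a b : lam (bar a) (lam a b) = b.
Proof. by rewrite -lam_circ circVx lam1. Qed.

Lemma lamKV a b : lam a (lam (bar a) b) = b.
Proof. by rewrite -lam_circ circxV lam1. Qed.

Lemma lam_inj a b d : lam a b = lam a d -> b = d.
Proof. by move=> E; rewrite -(lamK a b) E lamK. Qed.

Lemma circ_lam_mu a b : lam a b ∘ mu a b = a ∘ b.
Proof. rewrite /mu; circ_eq B. Qed.

Lemma lam_mu a b : lam (lam a b) (mu a b) = (lam a b)^-1 * a * lam a b.
Proof. rewrite {1}/lam circ_lam_mu circ_lam; group_eq G. Qed.

Lemma braid_first a b d :
  lam (lam a b) (lam (mu a b) d) = lam a (lam b d).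
Proof. by rewrite -lam_circ circ_lam_mu lam_circ. Qed.

Lemma braid_second a b d :
  mu (lam a b) (lam (mu a b) d) = lam (mu a (lam b d)) (mu b d).
Proof.
set x := lam a (lam b d).
apply: (lam_inj x).
rewrite {1}/x -(braid_first a b d) lam_mu braid_first -/x.
by rewrite -lam_circ /x circ_lam_mu lam_circ lam_mu lam_conj.
Qed.

(* The third components agree because both triples have the same first two
   components and the same circle product a ∘ b ∘ d. *)
Lemma braid_third a b d :
  mu (mu a b) d = mu (mu a (lam b d)) (mu b d).
Proof.
have cancel u s t : u ∘ s = u ∘ t -> s = t.
  by move=> Eu; rewrite -[s](circ1x B) -(circVx B u) -circA Eu circA circVx circ1x.
apply: (cancel (lam (lam a b) (lam (mu a b) d) ∘ mu (lam a b) (lam (mu a b) d))).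
transitivity (a ∘ b ∘ d).
- by rewrite circ_lam_mu -circA circ_lam_mu circA circ_lam_mu.
- symmetry; rewrite braid_first braid_second -circA circ_lam_mu circA circ_lam_mu.
  by rewrite -circA circ_lam_mu circA.
Qed.

Lemma gv_braid : braid_eq G gv_solution.
Proof.
by move=> [[a b] d]; rewrite /= braid_first braid_second braid_third.
Qed.

(* Non-degeneracy: σ_a = λ_a is inverted by λ_{bar a}; τ_b = mu(-, b) is
   inverted by [tau_inv b], thanks to the formula [bar_mu]. *)
Definition tau_inv (b v : G) : G := bar (bar v * bar b) ∘ bar b.

Lemma bar_mu a b : bar (mu a b) = bar (a ∘ b) * (bar b)^-1.
Proof.
have -> : bar (mu a b) = bar (a ∘ b) ∘ lam a b by rewrite /mu; circ_eq B.
have E : bar (a ∘ b) ∘ a = bar b by circ_eq B.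
rewrite circ_lam -lam_circ E /lam circVx; group_eq G.
Qed.

Lemma tau_invK b a : tau_inv b (mu a b) = a.
Proof.
rewrite /tau_inv bar_mu.
have -> : bar (a ∘ b) * (bar b)^-1 * bar b = bar (a ∘ b) by group_eq G.
circ_eq B.
Qed.

Lemma tau_invKV b v : mu (tau_inv b v) b = v.
Proof.
have E : bar (tau_inv b v ∘ b) = bar v * bar b by rewrite /tau_inv; circ_eq B.
have -> : mu (tau_inv b v) b = bar (bar (mu (tau_inv b v) b)) by circ_eq B.
rewrite bar_mu E; have -> : bar v * bar b * (bar b)^-1 = bar v by group_eq G.
circ_eq B.
Qed.

Lemma gv_nondegenerate : nondegenerate G gv_solution.
Proof.
split=> [a | b].
- by exists (lam (bar a)) => b; rewrite /sigma /=; [apply: lamK | apply: lamKV].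
- by exists (tau_inv b) => a; rewrite /tau /=; [apply: tau_invK | apply: tau_invKV].
Qed.
End SkewBraceSolution.

Arguments lam {G}.
Arguments mu {G}.
Arguments gv_solution {G}.

Section OppositeSolution.
Variables (G : group) (B : skew_brace G).
Local Notation "a ∘ b" := (circ B a b) (at level 40, left associativity).
Local Notation bar := (cinv B).

Lemma lam_opp (a b : G) : lam (opp_brace B) a b = a ∘ b * a^-1 :> G.
Proof. by []. Qed.

Lemma mu_opp (a b : G) : mu (opp_brace B) a b = bar (lam (opp_brace B) a b) ∘ (a ∘ b).
Proof. by []. Qed.

(* r_{B^op} is a left inverse of r_B; applied to B^op, also a right inverse. *)
Lemma gv_solution_oppK p : gv_solution (opp_brace B) (gv_solution B p) = p.
Proof.
case: p => a b.
have E : lam (opp_brace B) (lam B a b) (mu B a b) = a.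
  by rewrite lam_opp circ_lam_mu /lam; group_eq G.
cbn -[lam mu]; rewrite mu_opp E circ_lam_mu; congr pair.
circ_eq B.
Qed.

Lemma gv_solution_opp_coincide :
  coincide G (gv_solution B) (gv_solution (opp_brace B)) <-> abelian G.
Proof.
split=> [E x y | comm [a b]].
- have Hlam (a c : G) : a^-1 * c = c * a^-1.
    have := E (a, bar a ∘ c); cbn -[lam mu]; rewrite lam_opp => -[Hl _].
    by move: Hl; rewrite /lam circA circxV circ1x.
  transitivity (x * (y * x^-1) * x); first by group_eq G.
  by rewrite -Hlam; group_eq G.
- have Hlam : lam B a b = lam (opp_brace B) a b by rewrite lam_opp /lam comm.
  by rewrite /= /mu Hlam.
Qed.
End OppositeSolution.

Lemma gv_solution_bijective (G : group) (B : skew_brace G) : bijective (gv_solution B).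
Proof.
exists (gv_solution (opp_brace B)); first exact: (gv_solution_oppK G B).
exact: (gv_solution_oppK _ (opp_brace B)).
Qed.

Theorem gv_nd_solution (G : group) (B : skew_brace G) : nd_solution G (gv_solution B).
Proof.
split; last exact: gv_nondegenerate.
split; first exact: inhabits 1.
split; [exact: gv_solution_bijective | exact: gv_braid].
Qed.

Theorem skew_brace_solutions (G : group) (B : skew_brace G) :
  nd_solution G (gv_solution B) /\ nd_solution G (gv_solution (opp_brace B)) /\
  mutually_inverse G (gv_solution B) (gv_solution (opp_brace B)) /\
  (coincide G (gv_solution B) (gv_solution (opp_brace B)) <-> abelian G).
Proof.
split; first exact: gv_nd_solution.
split; first exact: gv_nd_solution _ (opp_brace B).
split; last exact: gv_solution_opp_coincide.
split=> p; [exact: gv_solution_oppK _ (opp_brace B) p | exact: gv_solution_oppK].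
Qed.

Section Endomorphism.
Variables (G : group) (psi : G -> G).
Hypothesis psi_endo : is_endo G psi.

Lemma psi1 : psi 1 = 1.
Proof.
have E := psi_endo 1 1; rewrite gmul1g in E.
transitivity ((psi 1)^-1 * (psi 1 * psi 1)); first by group_eq G.
by rewrite -E; group_eq G.
Qed.

Lemma psiV x : psi x^-1 = (psi x)^-1.
Proof.
have E := psi_endo x x^-1; rewrite gmulgV psi1 in E.
transitivity ((psi x)^-1 * (psi x * psi x^-1)); first by group_eq G.
by rewrite -E; group_eq G.
Qed.
End Endomorphism.
Arguments psi1 {G psi}.
Arguments psiV {G psi}.

Lemma central_commutator (G : group) (psi : G -> G) (A B : G -> Prop) a b :
  maps_into_center G psi (comm_subgroup G A B) -> A a -> B b ->
  center G (psi (gcomm G a b)).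
Proof. by move=> H Aa Bb; apply: H; apply: gen_in; exists a, b. Qed.

Section PsiBraces.
Variables (G : group) (psi : G -> G).
Hypothesis psi_endo : is_endo G psi.

Definition gconj (g h : G) : G := g * h * g^-1.

Definition psi_comm_psi (x y : G) : G := psi (gcomm G (psi x) y).
Definition psi_comm (x y : G) : G := psi (gcomm G x y).

Definition psi_circ (a b : G) : G := a * gconj (psi a) b.
Definition psi_cinv (a : G) : G := gconj (psi a^-1) a^-1.

Local Notation "a ∘ b" := (psi_circ a b) (at level 40, left associativity).

Ltac push_psi := rewrite ?psi_endo ?(psiV psi_endo) ?(psi1 psi_endo).
(* The defects are the atoms treated as central in word identities. *)
Ltac central_defect x :=
  lazymatch x with
  | psi_comm_psi _ _ => constr:(true)
  | psi_comm _ _ => constr:(true)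
  | _ => constr:(false)
  end.
Ltac prove_central := solve [match goal with H : forall x y, center _ _ |- _ => apply: H end].
Ltac psi_eq := group_eq_with G central_defect prove_central.

Lemma psi_gconj x y : psi (gconj (psi x) y) = psi_comm_psi x y * psi y.
Proof. rewrite /psi_comm_psi /gcomm /gconj; push_psi; group_eq G. Qed.

Lemma psi_circ_mul a b : psi (a ∘ b) = psi a * psi_comm_psi a b * psi b.
Proof. rewrite /psi_circ psi_endo psi_gconj; group_eq G. Qed.

Lemma psi_cinv_eq a : psi (psi_cinv a) = psi_comm_psi a^-1 a^-1 * psi a^-1.
Proof. exact: psi_gconj. Qed.

Hypothesis psi_comm_psi_central : forall x y, center G (psi_comm_psi x y).

Lemma psi_circA x y z : x ∘ (y ∘ z) = x ∘ y ∘ z.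
Proof. rewrite {3}/psi_circ psi_circ_mul /psi_circ /gconj; psi_eq. Qed.

Lemma psi_circ1x x : 1 ∘ x = x.
Proof. rewrite /psi_circ /gconj (psi1 psi_endo); group_eq G. Qed.

Lemma psi_circx1 x : x ∘ 1 = x.
Proof. rewrite /psi_circ /gconj; group_eq G. Qed.

Lemma psi_circVx x : psi_cinv x ∘ x = 1.
Proof. rewrite /psi_circ psi_cinv_eq /psi_cinv /gconj; psi_eq. Qed.

Lemma psi_circxV x : x ∘ psi_cinv x = 1.
Proof. rewrite /psi_circ /psi_cinv /gconj; push_psi; group_eq G. Qed.

Lemma psi_circ_compat a b d : a ∘ (b * d) = a ∘ b * a^-1 * (a ∘ d).
Proof. rewrite /psi_circ /gconj; group_eq G. Qed.

Definition psi_brace : skew_brace G :=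
  SkewBrace G psi_circ psi_cinv psi_circA psi_circ1x psi_circx1 psi_circVx psi_circxV
    psi_circ_compat.

Lemma psi_cinv_circ a x : psi_cinv a ∘ x = (psi a)^-1 * a^-1 * x * psi a.
Proof. rewrite /psi_circ psi_cinv_eq /psi_cinv /gconj; push_psi; psi_eq. Qed.

Lemma r1_gv : r1 G psi = gv_solution psi_brace.
Proof.
apply: functional_extensionality => -[g h]; cbn -[lam mu].
have E : lam psi_brace g h = gconj (psi g) h by rewrite /lam /= /psi_circ; group_eq G.
rewrite /mu E /= psi_cinv_circ psi_gconj /psi_circ /gconj; congr pair.
push_psi; psi_eq.
Qed.

Lemma psi_conj_circ g h :
  psi (g ∘ h * g^-1) = psi g * (psi_comm_psi g h * psi h) * (psi g)^-1.
Proof. rewrite psi_endo psi_circ_mul (psiV psi_endo); group_eq G. Qed.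

Lemma r2_gv : r2 G psi = gv_solution (opp_brace psi_brace).
Proof.
apply: functional_extensionality => -[g h]; cbn -[lam mu].
rewrite mu_opp !lam_opp /= psi_cinv_circ psi_conj_circ /psi_circ /gconj.
congr pair; first by group_eq G.
push_psi; psi_eq.
Qed.

Lemma psi_circE a b : a ∘ b = a * psi a * b * (psi a)^-1.
Proof. rewrite /psi_circ /gconj; group_eq G. Qed.

Hypothesis psi_comm_central : forall x y, center G (psi_comm x y).

Lemma psi_swap a b : psi a * psi b = psi_comm a b * psi b * psi a.
Proof. rewrite /psi_comm /gcomm; push_psi; group_eq G. Qed.

Lemma psi_mul_compat a b d : a * (b ∘ d) = (a * b) ∘ psi_cinv a ∘ (a * d).
Proof.
rewrite -psi_circA psi_cinv_circ /psi_circ /gconj psi_endo (psi_swap a b); psi_eq.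
Qed.

Definition psi_circ_brace : skew_brace (circ_group psi_brace) :=
  SkewBrace (circ_group psi_brace) (gmul G) (ginv G) (gmulA G) (gmul1g G) (gmulg1 G)
    (gmulVg G) (gmulgV G) psi_mul_compat.

Lemma r3_gv : r3 G psi = gv_solution psi_circ_brace.
Proof.
apply: functional_extensionality => -[g h]; cbn -[lam mu].
have E : lam psi_circ_brace g h = (psi g)^-1 * h * psi g.
  by rewrite /lam /= psi_cinv_circ; group_eq G.
by rewrite /mu E /=; congr pair; group_eq G.
Qed.

Lemma r4_gv : r4 G psi = gv_solution (opp_brace psi_circ_brace).
Proof.
apply: functional_extensionality => -[g h]; cbn -[lam mu].
have E : lam (opp_brace psi_circ_brace) g h = g * h * psi h * g^-1 * (psi h)^-1.
  rewrite lam_opp /= /psi_circ /psi_cinv /gconj; push_psi.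
  rewrite (psi_swap g h); psi_eq.
by rewrite mu_opp E /=; congr pair; group_eq G.
Qed.

Lemma psi_circ_abelian :
  abelian (circ_group psi_brace) <->
  (forall g h : G, g * psi g * h * (psi g)^-1 = h * psi h * g * (psi h)^-1).
Proof. by split=> H g h; move: (H g h); rewrite /= ?psi_circE. Qed.
End PsiBraces.

Theorem mainTheorem7 (G : group) (psi : G -> G) (Hpsi : is_endo G psi) :
  maps_into_center G psi (comm_subgroup G (image G psi) (whole G)) ->
  (nd_solution G (r1 G psi) /\ nd_solution G (r2 G psi) /\
   mutually_inverse G (r1 G psi) (r2 G psi) /\
   (coincide G (r1 G psi) (r2 G psi) <-> abelian G)) /\
  (maps_into_center G psi (comm_subgroup G (whole G) (whole G)) ->
   nd_solution G (r3 G psi) /\ nd_solution G (r4 G psi) /\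
   mutually_inverse G (r3 G psi) (r4 G psi) /\
   (coincide G (r3 G psi) (r4 G psi) <->
    (forall g h : G, g * psi g * h * (psi g)^-1 = h * psi h * g * (psi h)^-1))).
Proof.
move=> central_psi_comm_psi.
have Hc : forall x y, center G (psi_comm_psi G psi x y).
  by move=> x y; apply: central_commutator central_psi_comm_psi _ _; [exists x | ].
split.
  by rewrite (r1_gv _ _ Hpsi Hc) (r2_gv _ _ Hpsi Hc); apply: skew_brace_solutions.
move=> central_psi_comm.
have Hd : forall x y, center G (psi_comm G psi x y).
  by move=> x y; apply: central_commutator central_psi_comm _ _.
rewrite (r3_gv _ _ Hpsi Hc Hd) (r4_gv _ _ Hpsi Hc Hd) -(psi_circ_abelian _ _ Hpsi Hc).
exact: (skew_brace_solutions _ (psi_circ_brace _ _ Hpsi Hc Hd)).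
Qed.
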